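(* Assume the standing setting below, fix a planar drawing of $H$ realizing $\pi$, and let $\widetilde P,\overline P$ be two distinct paths among $P_1,\dots,P_\ell$ that share a vertex $v\in V\setminus\{s\}$. Consider the tri-coloring of $H$ induced by $\widetilde P,\overline P$ and $v$. Then every path $P\in\{P_1,\dots,P_\ell\}$ changes its color at no vertex other than $v$; in particular it changes its color at most once.
   Context: Standing setting: $G=(V,A)$ is an acyclic planar directed graph (parallel arcs allowed), $s\in V$, $(H=(V,F),\pi,\phi)$ is an arc-split of $G$, and $P_1,\dots,P_\ell$ is a source-numbered nice $s$-path partitioning of $H$ in which every path has at least one arc and the last vertex of every $P_i$ has no outgoing arc in $H$. Definitions: paths are identified with their arc sets; $\delta^+(v),\delta^-(v)$ are the arcs leaving/entering $v$, $\delta(v)=\delta^+(v)\cup\delta^-(v)$. A combinatorial embedding is a family $\pi=(\pi_v)_{v\in V}$ of cyclic orderings of $\delta(v)$; it is planar if induced by a planar drawing (arcs around $v$ in counterclockwise order). For distinct $b_1,\dots,b_k\in\delta(v)$, listing $\delta(v)=\{a_1,\dots,a_m\}$ with $a_1=b_1$ and $a_{i+1}$ the successor of $a_i$ in $\pi_v$, $(b_1,\dots,b_k)$ is a $\pi_v$-progression if it is a subsequence of $a_1,\dots,a_m$. Two arc-disjoint paths $P,P'$ are crossing if they share a vertex $u$ internal to both such that, with $a,b$ the arcs of $P$ entering/leaving $u$ and $a',b'$ those of $P'$, $(a,a',b,b')$ or $(a',a,b',b)$ is a $\pi_u$-progression. An arc-split of $G$ is $(H,\pi,\phi)$ with $H=(V,F)$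 a directed graph, $\pi$ a planar combinatorial embedding of $H$, $\phi:F\to A$ preserving heads and tails, and each $\phi^{-1}(a)$ consecutive in $\pi_{\mathrm{head}(a)}$ and $\pi_{\mathrm{tail}(a)}$. An $s$-path partitioning of $H$ is a family of paths $P_1,\dots,P_\ell$ starting at $s$ with $F=P_1\dot\cup\cdots\dot\cup P_\ell$; nice means pairwise non-crossing; source-numbered means the first arcs $(a_1,\dots,a_\ell)$ form a $\pi_s$-progression. Tri-coloring: let $C$ be the plane subgraph formed by the union of the $s$-$v$ subpaths of $\widetilde P$ and $\overline P$ (orientations ignored). Every vertex has even degree in $C$, so the faces of $C$ (components of the plane minus the drawing of $C$) can be colored red and blue so that any two faces whose boundaries share an arc of $C$ get different colors (unique up to swapping colors). Each arc of $H$ not in $C$ gets the color of the face containing it; arcs of $C$ are colored black. A path changes color at a vertex $u$ if the arc of the path entering $u$ and the arc of the path leaving $u$ have different colors (among red, blue, black). *)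

From mathcomp Require Import all_boot fingroup perm.
Set Implicit Arguments. Unset Strict Implicit. Unset Printing Implicit Defensive.

(* Since all graphs considered are loopless
   (acyclic), the arcs of delta(v) are in bijection with the darts at v,
   where a dart is (e, true) = e seen from its tail, (e, false) = e seen
   from its head. *)
Definition dvert (V E : finType) (tl hd : E -> V) (d : E * bool) : V :=
  if d.2 then tl d.1 else hd d.1.

Definition acyclic (V E : finType) (tl hd : E -> V) : Prop :=
  forall (e : E) (p : seq E),
    path (fun x y => hd x == tl y) e p -> hd (last e p) != tl e.

(* A combinatorial embedding: sg is the (counterclockwise) successor
   permutation; at each vertex v it restricts to a single cyclic order of the
   darts at v (i.e. of delta(v)). *)
Definition rotation_system (V E : finType) (tl hd : E -> V)
    (sg : {perm E * bool}) : Prop :=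
  (forall d, dvert tl hd (sg d) = dvert tl hd d) /\
  (forall d d', dvert tl hd d = dvert tl hd d' -> fconnect sg d d').

(* Corners: the corner named by dart d at vertex dvert d is the angle
   between d and its successor sg d.  Face tracing permutation. *)
Definition facep (E : finType) (sg : {perm E * bool}) (d : E * bool) : E * bool :=
  (sg^-1)%g (d.1, ~~ d.2).

Definition adjV (V E : finType) (tl hd : E -> V) : rel V :=
  fun x y => [exists e, ((tl e == x) && (hd e == y)) || ((tl e == y) && (hd e == x))].

(* Planar combinatorial embedding: Euler's formula (genus 0 in every
   component): |V| - |E| + #faces = 2 #components, isolated vertices
   contributing one face each. *)
Definition planar_rot (V E : finType) (tl hd : E -> V) (sg : {perm E * bool}) : Prop :=
  rotation_system tl hd sg /\
  #|V| + fcard (facep sg) (@predT (E * bool))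
       + #|[pred x : V | [forall e, (tl e != x) && (hd e != x)]]|
  = 2 * n_comp (adjV tl hd) (@predT V) + #|E|.

Definition progression (E : finType) (sg : {perm E * bool}) (s : seq (E * bool)) : bool :=
  if s is d :: _ then subseq s (fingraph.orbit sg d) else true.

Definition consecutive_at (V E : finType) (tl hd : E -> V) (sg : {perm E * bool})
    (v : V) (S : pred E) : Prop :=
  exists (d : E * bool) (k : nat), forall e : E * bool,
    ((dvert tl hd e == v) && S e.1) = (e \in traject sg d k).

Definition arc_split (V E A : finType) (tlG hdG : A -> V) (tl hd : E -> V)
    (sg : {perm E * bool}) (phi : E -> A) : Prop :=
  planar_rot tl hd sg /\
  (forall f, tlG (phi f) = tl f /\ hdG (phi f) = hd f) /\
  (forall a : A, consecutive_at tl hd sg (hdG a) (fun f => phi f == a) /\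
                 consecutive_at tl hd sg (tlG a) (fun f => phi f == a)).

(* Paths are sequences of arcs; an s-path has at least one arc, starts at s
   and is a directed walk (hence a path, by acyclicity). *)
Definition is_spath (V E : finType) (tl hd : E -> V) (s : V) (p : seq E) : bool :=
  if p is e :: r then (tl e == s) && path (fun x y => hd x == tl y) e r else false.

(* (a, b) are consecutive arcs of p (so hd a is internal to p). *)
Definition consec (E : finType) (p : seq E) (a b : E) : bool :=
  (a, b) \in zip p (behead p).

Definition crossing (V E : finType) (tl hd : E -> V) (sg : {perm E * bool})
    (p q : seq E) : Prop :=
  exists a b a' b', [/\ consec p a b, consec q a' b', hd a = hd a' &
    progression sg [:: (a, false); (a', false); (b, true); (b', true)] \/
    progression sg [:: (a', false); (a, false); (b', true); (b, true)]].

Definition last_vertex (V E : finType) (hd : E -> V) (p : seq E) : option V :=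
  if p is e :: r then Some (hd (last e r)) else None.

Definition path_vertices (V E : finType) (hd : E -> V) (s : V) (p : seq E) : seq V :=
  s :: map hd p.

(* Standing setting: (P i)_{i < l} is a source-numbered nice s-path
   partitioning of H, each path nonempty and ending at a sink of H. *)
Definition standing_partition (V E : finType) (tl hd : E -> V)
    (sg : {perm E * bool}) (s : V) (l : nat) (P : 'I_l -> seq E) : Prop :=
  [/\ forall i, is_spath tl hd s (P i),
      forall f : E, \sum_(i < l) count_mem f (P i) = 1,
      forall i j, i != j -> ~ crossing tl hd sg (P i) (P j),
      progression sg [seq (a, true) | i <- enum 'I_l, a <- take 1 (P i)] &
      forall i x, last_vertex hd (P i) = Some x -> forall f, tl f != x].

Definition prefix_to (V E : finType) (hd : E -> V) (v : V) (p : seq E) : seq E :=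
  take (find (fun a => hd a == v) p).+1 p.

(* A side-coloring of the corners of H (red = true, blue = false) realizing
   the 2-coloring of the faces of C: corners on the same side of an arc are
   in the same face of C (same color); the two sides of an arc get different
   colors iff the arc belongs to C. *)
Definition corner_coloring (E : finType) (sg : {perm E * bool}) (inC : pred E)
    (col : E * bool -> bool) : Prop :=
  (forall d, col (facep sg d) = col d) /\
  (forall d, (col ((sg^-1)%g d) != col d) = inC d.1).

Inductive color := Red | Blue | Black.

Definition color_eqb (c1 c2 : color) : bool :=
  match c1, c2 with
  | Red, Red | Blue, Blue | Black, Black => true
  | _, _ => false
  end.

(* Color of an arc: black if in C, else the color of the face of C
   containing it (= color of either side). *)
Definition arc_color (E : finType) (inC : pred E) (col : E * bool -> bool) (f : E) : color :=
  if inC f then Black else if col (f, true) then Red else Blue.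

(* p changes color at the vertex hd a, where (a,b) consecutive arcs of p. *)
Definition changes_color (E : finType) (inC : pred E) (col : E * bool -> bool)
    (a b : E) : bool :=
  ~~ color_eqb (arc_color inC col a) (arc_color inC col b).

(* Let C be the union of the s-v prefixes of the two paths P_i, P_j, and let a
   path P_k enter and leave a vertex u <> v through arcs a, b.  The argument:
   1. If one of a, b lies in C then so does the other (a prefix of P_i or P_j
      is closed under taking the consecutive arc at any vertex other than v,
      and the arcs of different paths are disjoint), so both are black.
   2. Otherwise both are red/blue, and walking counterclockwise around u from
      the head-side of a to the tail-side of b the face color flips once at
      every dart of C: a color change means an odd number of C-darts lie
      strictly between the two.
   3. But the C-darts at u come in pairs (the entering and leaving arc of the
      prefix of P_i, resp. P_j, through u), and since P_k does not cross these
      paths the two darts of each pair lie on the same side: an even number.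
   Hence P_k changes color only at v, which it visits at most once since H is
   acyclic. *)

From mathcomp Require Import all_boot fingroup perm.
Set Implicit Arguments. Unset Strict Implicit. Unset Printing Implicit Defensive.

(* The arc-split H of an acyclic graph G is acyclic: phi maps walks of H to
   walks of G, preserving endpoints. *)
Lemma acyclic_arc_split (V A E : finType) (tlG hdG : A -> V) (tl hd : E -> V)
    (phi : E -> A) :
  (forall f, tlG (phi f) = tl f /\ hdG (phi f) = hd f) ->
  acyclic tlG hdG -> acyclic tl hd.
Proof.
move=> Hphi acycG e p Hp.
have HpG : path (fun x y => hdG x == tlG y) (phi e) (map phi p).
  elim: p e Hp => //= y p IH e /andP[Hey Hp]; rewrite IH // andbT.
  by case: (Hphi e) => _ ->; case: (Hphi y) => -> _.
have := acycG _ _ HpG; rewrite last_map.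
by case: (Hphi (last e p)) => _ ->; case: (Hphi e) => -> _.
Qed.

Section Walks.
Variables (V E : finType) (tl hd : E -> V).
Hypothesis acyclicH : acyclic tl hd.
Local Notation step := (fun x y => hd x == tl y).

Lemma consec_cons2 (x y : E) r a b :
  consec (x :: y :: r) a b = ((a, b) == (x, y)) || consec (y :: r) a b.
Proof. by rewrite /consec /= inE. Qed.

Lemma consec_mem (p : seq E) a b : consec p a b -> a \in p /\ b \in p.
Proof.
elim: p => // x [|y r] IH //; rewrite consec_cons2 => /orP[/eqP[-> ->]|/IH[]].
  by rewrite !inE !eqxx orbT.
by move=> Ha Hb; rewrite !inE in Ha Hb *; rewrite Ha Hb !orbT.
Qed.

Lemma consec_take m (p : seq E) a b : consec (take m p) a b -> consec p a b.
Proof.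
elim: p m => [|x p IH] [|m] //=; case: p IH => [|y r] IH; first by case: m.
case: m => [|m] //=; rewrite !consec_cons2 => /orP[->//|H].
by rewrite (IH m.+1 H) orbT.
Qed.

Lemma walk_no_return (e : E) r a : path step e r -> a \in e :: r -> hd a != tl e.
Proof.
move=> Hp; rewrite inE => /orP[/eqP->|ar]; first exact: (acyclicH (p := [::])).
case/splitPr: ar Hp => r1 r2; rewrite cat_path => /andP[H1 /= /andP[H2 _]].
have := @acyclicH e (rcons r1 a); rewrite last_rcons; apply.
by rewrite -cats1 cat_path H1 /= H2.
Qed.

Lemma consec_link (e : E) r a b : path step e r -> consec (e :: r) a b -> hd a = tl b.
Proof.
elim: r e => // y r IH e /= /andP[He Hp].
by rewrite consec_cons2 => /orP[/eqP[-> ->]|]; [apply/eqP | apply: IH].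
Qed.

Lemma consec_uniq (e : E) r a1 b1 a2 b2 : path step e r ->
  consec (e :: r) a1 b1 -> consec (e :: r) a2 b2 -> hd a1 = hd a2 ->
  a1 = a2 /\ b1 = b2.
Proof.
elim: r e => // y r IH e /= /andP[He Hp]; rewrite !consec_cons2.
case/orP=> [/eqP[-> ->]|C1]; case/orP=> [/eqP[-> ->]|C2] //.
- move=> Eh; have [m2 _] := consec_mem C2.
  by have := walk_no_return Hp m2; rewrite -Eh (eqP He) eqxx.
- move=> Eh; have [m1 _] := consec_mem C1.
  by have := walk_no_return Hp m1; rewrite Eh (eqP He) eqxx.
- exact: IH Hp C1 C2.
Qed.

Lemma consec_next (e : E) r f : f \in e :: r -> f != last e r ->
  exists b, consec (e :: r) f b.
Proof.
elim: r e => [|y r IH] e; first by rewrite inE => /eqP->; rewrite eqxx.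
rewrite inE => /orP[/eqP->|fr] Hl; first by exists y; rewrite consec_cons2 eqxx.
by have [b Hb] := IH y fr Hl; exists b; rewrite consec_cons2 Hb orbT.
Qed.

Lemma consec_prev (e : E) r f : f \in e :: r -> f != e ->
  exists a, consec (e :: r) a f.
Proof.
elim: r e => [|y r IH] e; first by rewrite inE => /eqP->; rewrite eqxx.
rewrite inE => /orP[/eqP->|fr]; first by rewrite eqxx.
move=> _; have [->|fy] := eqVneq f y; first by exists e; rewrite consec_cons2 eqxx.
by have [a Ha] := IH y fr fy; exists a; rewrite consec_cons2 Ha orbT.
Qed.

Lemma count_consec_at (e : E) r (v : V) : path step e r ->
  count (fun ab : E * E => hd ab.1 == v) (zip (e :: r) r) <= 1.
Proof.
elim: r e => // y r IH e /= /andP[He Hp].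
case: eqP => Hv; last exact: IH.
rewrite add1n ltnS leqn0 -/(zip (y :: r) r) eqn0Ngt -has_count.
apply/hasPn => -[a b] /= Hab; have [ma _] := @consec_mem (y :: r) a b Hab.
by have := walk_no_return Hp ma; rewrite -(eqP He) Hv => /negbTE->.
Qed.

Lemma prefix_shape (v : V) (e : E) r :
  path step e r -> v \in map hd (e :: r) ->
  exists r', [/\ prefix_to hd v (e :: r) = e :: r', path step e r' &
                 hd (last e r') = v].
Proof.
move=> Hp Hv; rewrite /prefix_to /=; case: ifP => He.
  by exists [::]; split => //; [case: (r) | apply/eqP].
have Hhas : has (fun a => hd a == v) r.
  move: Hv; rewrite /= inE => /orP[/eqP Hve|/mapP[f fr Hf]].
    by rewrite -Hve eqxx in He.
  by apply/hasP; exists f => //; rewrite Hf.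
exists (take (find (fun a => hd a == v) r).+1 r); split => //; first exact: take_path.
have Hfind := nth_find e Hhas; rewrite has_find in Hhas.
by rewrite (take_nth e Hhas) last_rcons (eqP Hfind).
Qed.

Section Prefix.
Variables (v : V) (e : E) (r : seq E).
Hypotheses (Hp : path step e r) (Hv : v \in map hd (e :: r)).
Local Notation C := (prefix_to hd v (e :: r)).

Lemma prefix_forward a b : consec (e :: r) a b -> a \in C -> hd a != v -> b \in C.
Proof.
have [r' [HC Hp' Hl]] := prefix_shape Hp Hv; rewrite HC => Hab aC nav.
have [b' Hb'] : exists b', consec (e :: r') a b'.
  by apply: consec_next => //; apply: contraNneq nav => ->; rewrite Hl.
have Hb'r : consec (e :: r) a b' by rewrite -HC in Hb'; exact: consec_take Hb'.
have [_ ->] := consec_uniq Hp Hab Hb'r erefl.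
by case: (consec_mem Hb').
Qed.

Lemma prefix_backward a b : consec (e :: r) a b -> b \in C -> a \in C.
Proof.
have [r' [HC Hp' Hl]] := prefix_shape Hp Hv; rewrite HC => Hab bC.
have [am _] := consec_mem Hab.
have [a' Ha'] : exists a', consec (e :: r') a' b.
  apply: consec_prev => //; apply: contraNneq (walk_no_return Hp am) => be.
  by rewrite (consec_link Hp Hab) be.
have Ha'r : consec (e :: r) a' b by rewrite -HC in Ha'; exact: consec_take Ha'.
have [<- _] := consec_uniq Hp Ha'r Hab (etrans (consec_link Hp' Ha') (esym (consec_link Hp Hab))).
by case: (consec_mem Ha').
Qed.

Lemma prefix_dart_local (u : V) d : u != v -> u != tl e -> dvert tl hd d = u ->
  d.1 \in C ->
  exists ai bi, [/\ consec C ai bi, hd ai = u & d = (ai, false) \/ d = (bi, true)].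
Proof.
have [r' [HC Hp' Hl]] := prefix_shape Hp Hv; rewrite HC => nuv nue.
case: d => f [] Hu fC; rewrite /dvert /= in Hu fC.
  have [a' Ha'] : exists a', consec (e :: r') a' f.
    by apply: consec_prev => //; apply: contraNneq nue => fe; rewrite -Hu fe.
  by exists a', f; split; [| rewrite (consec_link Hp' Ha') | right].
have [b' Hb'] : exists b', consec (e :: r') f b'.
  by apply: consec_next => //; apply: contraNneq nuv => fe; rewrite -Hu fe Hl.
by exists f, b'; split => //; left.
Qed.

Lemma prefix_darts_at (u : V) d : u != v -> u != tl e -> dvert tl hd d = u ->
  d.1 \in C ->
  exists ai bi, [/\ consec C ai bi, hd ai = u &
     forall d', dvert tl hd d' = u ->
        (d'.1 \in C) = (d' == (ai, false)) || (d' == (bi, true))].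
Proof.
move=> nuv nue Hu dC.
have [r' [HC Hp' _]] := prefix_shape Hp Hv.
have [ai [bi [Hab Hai _]]] := prefix_dart_local nuv nue Hu dC.
exists ai, bi; split => // d' Hu'; apply/idP/idP; last first.
  by have [m1 m2] := consec_mem Hab; case/orP => /eqP->.
move=> d'C; have [a2 [b2 [Hab2 Ha2 Hor]]] := prefix_dart_local nuv nue Hu' d'C.
rewrite HC in Hab Hab2.
have [E1 E2] := consec_uniq Hp' Hab2 Hab (etrans Ha2 (esym Hai)).
by case: Hor => ->; rewrite ?E1 ?E2 eqxx ?orbT.
Qed.

End Prefix.
End Walks.

Section Rotation.
Variables (D : finType) (sg : {perm D}).

Definition between (x y : D) : seq D := traject sg (sg x) (findex sg x y).-1.

Lemma rcons_between x y : fconnect sg x y -> x != y ->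
  rcons (between x y) y = traject sg (sg x) (findex sg x y).
Proof.
move=> Hxy nxy; have := findex_eq0 sg x y; have := iter_findex Hxy.
rewrite /between; case: (findex sg x y) => [|n] Hy; first by rewrite eqxx (negbTE nxy).
by rewrite trajectSr -iterSr Hy.
Qed.

Lemma orbit_between x y : fconnect sg x y -> x != y ->
  exists R, fingraph.orbit sg x = x :: between x y ++ y :: R.
Proof.
move=> Hxy nxy; have := findex_eq0 sg x y; have := iter_findex Hxy.
have := findex_max Hxy; rewrite /between.
case: (findex sg x y) => [|n] Hlt Hy; first by rewrite eqxx (negbTE nxy).
move=> _; exists (traject sg (sg y) (fingraph.order sg x - n.+1).-1).
have Ho : fingraph.order sg x = n.+1 + (fingraph.order sg x - n.+1).-1.+1.
  by rewrite prednK ?subn_gt0 // subnKC // ltnW.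
by rewrite /fingraph.orbit {1}Ho trajectD trajectS Hy trajectS.
Qed.

Lemma between_uniq x y : fconnect sg x y -> x != y -> uniq (between x y).
Proof.
move=> Hxy nxy; have [R HO] := orbit_between Hxy nxy.
by have := orbit_uniq sg x; rewrite HO cons_uniq cat_uniq => /andP[_ /andP[]].
Qed.

Lemma between_orbit x y q : fconnect sg x y -> x != y -> q \in between x y ->
  q \in fingraph.orbit sg x.
Proof.
by move=> Hxy nxy qT; have [R ->] := orbit_between Hxy nxy; rewrite inE mem_cat qT orbT.
Qed.

Lemma separated_interleave x y p1 p2 : fconnect sg x y -> x != y ->
  p1 \in fingraph.orbit sg x -> p2 \in fingraph.orbit sg x ->
  p1 != x -> p1 != y -> p2 != x -> p2 != y ->
  (p1 \in between x y) != (p2 \in between x y) ->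
  subseq [:: x; p1; y; p2] (fingraph.orbit sg x) \/
  subseq [:: p1; x; p2; y] (fingraph.orbit sg p1).
Proof.
move=> Hxy nxy m1 m2 n1x n1y n2x n2y; have [R HO] := orbit_between Hxy nxy.
set T := between x y in HO *.
have inR q : q \in fingraph.orbit sg x -> q != x -> q != y -> q \notin T -> q \in R.
  by rewrite HO inE mem_cat inE => /orP[->|/orP[->|/orP[->|]]].
case: (boolP (p1 \in T)) => H1; case: (boolP (p2 \in T)) => H2 //= _.
  left; rewrite HO /= eqxx -[[:: p1; y; p2]]/([:: p1] ++ [:: y; p2]).
  by apply: cat_subseq; rewrite ?sub1seq //= eqxx sub1seq inR.
right; case/splitPr: (inR p1 m1 n1x n1y H1) HO => R1 R2 HO.
have HO' : fingraph.orbit sg x = (x :: T ++ y :: R1) ++ p1 :: R2 by rewrite HO /= -catA.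
have Hu := orbit_uniq sg x.
have Hn1 : p1 \notin x :: T ++ y :: R1.
  by move: Hu; rewrite HO' cat_uniq => /and3P[_ /hasPn /(_ p1 (mem_head _ _)) ->].
rewrite (orbitE (cycle_orbit (@perm_inj _ sg) x) Hu m1) HO' index_cat.
rewrite (negbTE Hn1) [index p1 _]/= eqxx addn0 rot_size_cat /= eqxx.
apply: subseq_trans (suffix_subseq R2 _); rewrite /= eqxx.
rewrite -[[:: p2; y]]/([:: p2] ++ [:: y]); apply: cat_subseq; rewrite ?sub1seq //=.
exact: mem_head.
Qed.
End Rotation.

Section Darts.
Variables (V E : finType) (tl hd : E -> V) (sg : {perm E * bool}).
Hypothesis rot : rotation_system tl hd sg.

Lemma rotation_link a b : hd a = tl b -> fconnect sg (a, false) (b, true).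
Proof. by case: rot => _ Hconn Hab; apply: Hconn; rewrite /dvert /= Hab. Qed.

Lemma dvert_orbit x q : q \in fingraph.orbit sg x -> dvert tl hd q = dvert tl hd x.
Proof.
case: rot => Hv _; rewrite -fconnect_orbit => /iter_findex <-.
by elim: (findex _ _ _) => // m IH; rewrite iterS Hv.
Qed.

Lemma interleaved_crossing (p q : seq E) a b a' b' :
  consec p a b -> consec q a' b' -> hd a = tl b -> hd a' = tl b' -> hd a = hd a' ->
  a' != a -> b' != b ->
  ((a', false) \in between sg (a, false) (b, true)) !=
    ((b', true) \in between sg (a, false) (b, true)) ->
  crossing tl hd sg p q.
Proof.
move=> Hab Ha'b' Hlink Hlink' Hu na nb Hsep.
have Hxy := rotation_link Hlink.
have m1 : (a', false) \in fingraph.orbit sg (a, false).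
  by rewrite -fconnect_orbit; case: rot => _; apply; rewrite /dvert /= Hu.
have m2 : (b', true) \in fingraph.orbit sg (a, false).
  by rewrite -fconnect_orbit; case: rot => _; apply; rewrite /dvert /= -Hlink' Hu.
have nx d : (d, true) != (a, false) by rewrite xpair_eqE andbF.
have ny d : (d, false) != (b, true) by rewrite xpair_eqE andbF.
have n1 : (a', false) != (a, false) by rewrite xpair_eqE andbT.
have n2 : (b', true) != (b, true) by rewrite xpair_eqE andbT.
exists a, b, a', b'; split => //.
by case: (separated_interleave Hxy (ny a) m1 m2 n1 (ny a') (nx b') n2 Hsep); [left | right].
Qed.

Section Coloring.
Variables (inC : pred E) (col : E * bool -> bool).
Hypothesis Hcol : corner_coloring sg inC col.

Lemma col_arc f : ~~ inC f -> col (f, false) = col (f, true).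
Proof.
case: Hcol => Hface Hside Hf.
have := Hface (f, true); rewrite /facep /= => <-.
by have := Hside (f, false); rewrite /= (negbTE Hf) => /negbFE/eqP.
Qed.

Lemma col_iter x m :
  col (iter m sg x) = col x (+) odd (count (fun d => inC d.1) (traject sg (sg x) m)).
Proof.
elim: m => [|m IH]; first by rewrite /= addbF.
rewrite trajectSr -cats1 count_cat /= addn0 oddD -iterSr addbA -IH oddb /=.
case: Hcol => _ Hside; have := Hside (sg (iter m sg x)); rewrite permK.
by case: (col _) => /=; case: (col _) => /= <-.
Qed.

Lemma color_change_odd a b : hd a = tl b -> ~~ inC a -> ~~ inC b ->
  col (a, true) != col (b, true) ->
  odd (count (fun d => inC d.1) (between sg (a, false) (b, true))).
Proof.
move=> Hlink Ha Hb; have Hxy := rotation_link Hlink.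
have nxy : (a, false) != (b, true) by rewrite xpair_eqE andbF.
have Hcy := col_iter (a, false) (findex sg (a, false) (b, true)).
rewrite (iter_findex Hxy) -(rcons_between Hxy nxy) -cats1 count_cat /= (negbTE Hb) in Hcy.
by rewrite Hcy -col_arc // addn0 [_ + false]addn0; case: (col _); case: odd.
Qed.

End Coloring.
End Darts.

Lemma count_two (T : eqType) (p1 p2 : T) (s : seq T) : uniq s -> p1 != p2 ->
  count (fun d => (d == p1) || (d == p2)) s = (p1 \in s) + (p2 \in s).
Proof.
move=> Us n12; rewrite -!count_uniq_mem // -count_predUI.
rewrite (@eq_count _ (predI _ _) pred0) ?count_pred0 ?addn0 //.
by move=> d /=; case: eqP => // ->; rewrite (negbTE n12).
Qed.

Section Partition.
Variables (V E : finType) (tl hd : E -> V) (sg : {perm E * bool}) (s v : V).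
Variables (l : nat) (P : 'I_l -> seq E).
Hypotheses (acyclicH : acyclic tl hd) (rot : rotation_system tl hd sg).
Hypotheses (spaths : forall i, is_spath tl hd s (P i))
  (partition : forall f, \sum_(i < l) count_mem f (P i) = 1)
  (nice : forall i j, i != j -> ~ crossing tl hd sg (P i) (P j)).
Hypothesis v_ne_s : v != s.
Local Notation step := (fun x y => hd x == tl y).
Local Notation prefix i := (prefix_to hd v (P i)).
Local Notation visits i := (v \in path_vertices hd s (P i)).

Lemma partition_disjoint f i1 i2 : f \in P i1 -> f \in P i2 -> i1 = i2.
Proof.
move=> f1 f2; case: (eqVneq i1 i2) => // n12; exfalso.
have c1 : 0 < count_mem f (P i1) by rewrite -has_count has_pred1.
have c2 : 0 < count_mem f (P i2) by rewrite -has_count has_pred1.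
move: (partition f) c1 c2; rewrite (bigD1 i1) // (bigD1 i2) /=; last by rewrite eq_sym n12.
by case: (count_mem f (P i1)) => // n1; case: (count_mem f (P i2)) => // n2; rewrite addSn addnS.
Qed.

Lemma spath_walk i : exists e r, [/\ P i = e :: r, tl e = s & path step e r].
Proof. by have := spaths i; case: (P i) => [|e r] //= /andP[/eqP Hs Hp]; exists e, r. Qed.

Lemma visit_walk i : visits i ->
  exists e r, [/\ P i = e :: r, tl e = s, path step e r & v \in map hd (e :: r)].
Proof.
have [e [r [Ei Hs Hp]]] := spath_walk i; rewrite /path_vertices Ei inE (negbTE v_ne_s).
by exists e, r.
Qed.

Lemma prefix_consec_closed i k a b : visits i -> consec (P k) a b -> hd a != v ->
  (a \in prefix i) = (b \in prefix i).
Proof.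
move=> vi Hab nav; have [e [r [Ei _ Hp Hv]]] := visit_walk vi.
have [ak bk] := consec_mem Hab.
apply/idP/idP => Hpre; have := mem_take Hpre => /(partition_disjoint) Hki.
- have {}Hki := Hki k ak; rewrite -Hki Ei in Hpre Hab *.
  exact: (prefix_forward acyclicH Hp Hv Hab Hpre nav).
- have {}Hki := Hki k bk; rewrite -Hki Ei in Hpre Hab *.
  exact: (prefix_backward acyclicH Hp Hv Hab Hpre).
Qed.

(* Step 3: if a path enters and leaves a vertex u <> v through arcs a, b
   outside the s-v prefix of a path through v, then the prefix has an even
   number of darts strictly between a and b in the rotation at u: it either
   avoids u, or passes through u with both its darts on one side, since the
   paths do not cross. *)
Lemma prefix_darts_even i k a b : visits i -> consec (P k) a b -> hd a != v ->
  a \notin prefix i -> b \notin prefix i ->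
  ~~ odd (count (fun d => d.1 \in prefix i) (between sg (a, false) (b, true))).
Proof.
move=> vi Hab nav naC nbC.
have [ek [rk [Ek Hsk Hpk]]] := spath_walk k; rewrite Ek in Hab.
have [e [r [Ei Hs Hp Hv]]] := visit_walk vi.
have [ak _] := consec_mem Hab.
have Hlink := consec_link Hpk Hab.
have nxy : (a, false) != (b, true) by rewrite xpair_eqE andbF.
have Hxy := rotation_link rot Hlink.
have at_u d : d \in between sg (a, false) (b, true) -> dvert tl hd d = hd a.
  by move=> dT; rewrite (dvert_orbit rot (between_orbit Hxy nxy dT)).
have [/hasP[d dT dC]|] := boolP (has (fun d => d.1 \in prefix i) (between sg (a, false) (b, true))); last first.
  by rewrite has_count -eqn0Ngt => /eqP->.
have nus : hd a != tl e by rewrite Hs -Hsk; apply: walk_no_return Hpk ak.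
rewrite Ei in naC nbC dC *.
have [ai [bi [Hc Hai Hdarts]]] := prefix_darts_at acyclicH Hp Hv nav nus (at_u d dT) dC.
have [aiC biC] := consec_mem Hc.
have Hc' : consec (e :: r) ai bi := consec_take Hc.
have nki : k != i.
  apply/eqP => Hki; have Hc2 : consec (ek :: rk) ai bi by rewrite -Ek Hki Ei.
  have [E1 _] := consec_uniq acyclicH Hpk Hab Hc2 (esym Hai).
  by move: naC; rewrite E1 aiC.
rewrite (eq_in_count (a2 := fun d => (d == (ai, false)) || (d == (bi, true)))); last first.
  by move=> q qT; apply: Hdarts; apply: at_u.
rewrite count_two ?between_uniq ?xpair_eqE ?andbF //.
case: (eqVneq ((ai, false) \in between sg (a, false) (b, true))
              ((bi, true) \in between sg (a, false) (b, true))) => [->|Hsep].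
  by case: (_ \in _).
case: (nice nki); rewrite Ek Ei.
have Hcross := interleaved_crossing rot Hab Hc' Hlink (consec_link Hp Hc') (esym Hai).
by apply: Hcross Hsep; [apply: contraNneq naC => <- | apply: contraNneq nbC => <-].
Qed.

Section TwoPaths.
Variables (i j : 'I_l) (col : E * bool -> bool).
Hypotheses (nij : i != j) (vi : visits i) (vj : visits j).
Local Notation inC := (fun f => f \in prefix i ++ prefix j).
Hypothesis Hcol : corner_coloring sg inC col.

(* Step 1 applied to C: off v, an arc pair of a path that changes color
   avoids C, for otherwise both arcs would be black. *)
Lemma color_change_avoids_C k a b : consec (P k) a b -> hd a != v ->
  changes_color inC col a b ->
  [/\ a \notin prefix i, a \notin prefix j, b \notin prefix i & b \notin prefix j].
Proof.
move=> Hab nav; rewrite /changes_color /arc_color /= !mem_cat.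
rewrite -(prefix_consec_closed vi Hab nav) -(prefix_consec_closed vj Hab nav).
by case: (a \in prefix i); case: (a \in prefix j).
Qed.

(* The prefixes of the two distinct paths are disjoint, so the C-darts of a
   sequence split into those of each prefix. *)
Lemma count_C_split (T : seq (E * bool)) : count (fun d => inC d.1) T =
  count (fun d => d.1 \in prefix i) T + count (fun d => d.1 \in prefix j) T.
Proof.
rewrite -count_predUI (@eq_count _ (predI _ _) pred0) ?count_pred0 ?addn0.
  by apply: eq_count => d; rewrite /= mem_cat.
move=> d /=; apply/negP => /andP[Hi Hj].
by move: nij; rewrite (partition_disjoint (mem_take Hi) (mem_take Hj)) eqxx.
Qed.

Lemma color_change_at_v k a b : consec (P k) a b -> changes_color inC col a b ->
  hd a = v.
Proof.
move=> Hab Hch; case: (eqVneq (hd a) v) => // nav; exfalso.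
have [naCi naCj nbCi nbCj] := color_change_avoids_C Hab nav Hch.
have [ek [rk [Ek _ Hpk]]] := spath_walk k.
have Hlink : hd a = tl b by apply: (consec_link Hpk); rewrite -Ek.
have notC f : f \notin prefix i -> f \notin prefix j -> ~~ inC f.
  by move=> Hi Hj; rewrite /= mem_cat negb_or Hi Hj.
have Hcne : col (a, true) != col (b, true).
  move: Hch; rewrite /changes_color /arc_color (negbTE (notC _ naCi naCj)).
  by rewrite (negbTE (notC _ nbCi nbCj)); do 2 case: col.
have := color_change_odd rot Hcol Hlink (notC _ naCi naCj) (notC _ nbCi nbCj) Hcne.
rewrite count_C_split oddD; have := prefix_darts_even vi Hab nav naCi nbCi.
by have := prefix_darts_even vj Hab nav naCj nbCj; do 2 case: odd.
Qed.

(* Consequently each path changes color at most once: it passes through v at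
   most once. *)
Lemma color_changes_at_most_once k :
  count (fun ab => changes_color inC col ab.1 ab.2) (zip (P k) (behead (P k))) <= 1.
Proof.
have [ek [rk [Ek _ Hpk]]] := spath_walk k.
rewrite (@eq_in_count _ _ (fun ab => changes_color inC col ab.1 ab.2 && (hd ab.1 == v))).
  rewrite Ek; apply: leq_trans (count_consec_at acyclicH v Hpk).
  by apply: sub_count => ab /andP[].
move=> [a b] Hab /=; case Hch: (changes_color _ _ a b) => //=.
by rewrite (color_change_at_v Hab Hch) eqxx.
Qed.
End TwoPaths.
End Partition.

Theorem mainTheorem5
  (V A E : finType) (tlG hdG : A -> V) (s : V)
  (tl hd : E -> V) (sg : {perm E * bool}) (phi : E -> A)
  (l : nat) (P : 'I_l -> seq E)
  (i j : 'I_l) (v : V) (col : E * bool -> bool) :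
  acyclic tlG hdG ->
  (exists sgG : {perm A * bool}, planar_rot tlG hdG sgG) ->
  arc_split tlG hdG tl hd sg phi ->
  standing_partition tl hd sg s P ->
  i != j ->
  v != s ->
  v \in path_vertices hd s (P i) ->
  v \in path_vertices hd s (P j) ->
  corner_coloring sg
    (fun f => f \in prefix_to hd v (P i) ++ prefix_to hd v (P j)) col ->
  forall k : 'I_l,
    let inC := fun f => f \in prefix_to hd v (P i) ++ prefix_to hd v (P j) in
    (forall a b, consec (P k) a b -> changes_color inC col a b -> hd a = v) /\
    count (fun ab => changes_color inC col ab.1 ab.2) (zip (P k) (behead (P k))) <= 1.
Proof.
move=> acycG _ [[rot _] [Hphi _]] [spaths partition nice _ _] nij nvs vi vj Hcol k inC.
have acycH := acyclic_arc_split Hphi acycG.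
split.
  by move=> a b; apply: (color_change_at_v acycH rot spaths partition nice nvs nij vi vj Hcol).
exact: (color_changes_at_most_once acycH rot spaths partition nice nvs nij vi vj Hcol).
Qed.
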